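(* The modified multiplicative price update algorithm is a truthful mechanism without money and with verification for CAs with unknown $k$-minded bidders and goods of supply $b$; it outputs an allocation in which each good is allocated at most $b$ times, and its approximation ratio is $O(b\, m^{1/b})$.
   Context: Multi-unit combinatorial auction: a set $\mathsf U$ of $m$ goods, each with supply $b\ge1$; $n$ bidders. True type of bidder $i$: $t_i=(v_i,\mathcal S_i)$ with $\mathcal S_i$ a private collection of $k$ nonempty subsets of $\mathsf U$ and $v_i:\mathcal S_i\to\mathbb R_{\ge0}$ private, extended by $v_i(T)=\max\{v_i(S'):S'\in\mathcal S_i,S'\subseteq T\}$ ($0$ if none). Declarations $(w,\mathcal W)$ have the same form. Modified multiplicative price update algorithm on declarations $(w_i,\mathcal W_i)$: let $v^i_{\max}=\max_{S\in\mathcal W_i}w_i(S)$; let $j$ be the bidder with largest $v^j_{\max}$ (smallest index on ties); set $\mu=(1+\epsilon)v^j_{\max}$ for a fixed $0<\epsilon\ll1$, $p_0=\mu/(4bm)$, $r=(4bm)^{1/b}$, and initial prices $p_e=p_0$; process bidders in the order $j,1,2,\dots,j-1,j+1,\dots,n$; when processing bidder $i$, let $S_i$ maximize $w_i(S)$ over $S\in\mathcal W_i$ with $w_i(S)\ge\sum_{e\in S}p_e$ (current prices; $S_i=\emptyset$ if none), allocate $S_i$ to $i$, and multiply $p_e$ by $r$ for every $e\in S_i$. Verification: bidder $i$ with true type $t_i$ facing $\mathbf b_{-i}$ may declare $b_i=(z,\mathcal T)$ only if $z(A_i(b_i,\mathbf b_{-i}))\le v_i(A_i(b_i,\mathbf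 b_{-i}))$. Truthful without money and with verification: for all $i$, $\mathbf b_{-i}$, true types $t_i$ and declarations $b_i$ permitted by verification, $v_i(A_i(t_i,\mathbf b_{-i}))\ge v_i(A_i(b_i,\mathbf b_{-i}))$. Approximation ratio $\alpha$: on every truthful input, the social welfare $\sum_i v_i(A_i)$ is at least $\mathrm{OPT}/\alpha$, where $\mathrm{OPT}$ is the maximum social welfare over allocations assigning each good at most $b$ times. *)

From mathcomp Require Import all_boot.
From Stdlib Require Import Reals.

Set Implicit Arguments. Unset Strict Implicit. Unset Printing Implicit Defensive.

Record btype (m : nat) := BType {
  bcoll : {set {set 'I_m}} ;
  bval  : {set 'I_m} -> R }.

Definition wf_type (m k : nat) (t : btype m) : Prop :=
  #|bcoll t| = k /\ set0 \notin bcoll t /\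
  (forall S, S \in bcoll t -> (0 <= bval t S)%R).

Definition vext m (t : btype m) (T : {set 'I_m}) : R :=
  foldr (fun (S : {set 'I_m}) acc => if S \subset T then Rmax (bval t S) acc else acc) 0%R
        (enum (bcoll t)).

Definition vmax m (t : btype m) : R :=
  foldr (fun (S : {set 'I_m}) acc => Rmax (bval t S) acc) 0%R (enum (bcoll t)).

Definition Rleb (x y : R) : bool := if Rle_dec x y then true else false.

(* first element of l maximising f (earliest one on ties) *)
Definition first_max (A : Type) (f : A -> R) (l : seq A) : option A :=
  foldl (fun acc x => match acc with
                      | None => Some x
                      | Some y => if Rlt_dec (f y) (f x) then Some x else Some y
                      end) None l.

Definition price_sum m (p : 'I_m -> R) (S : {set 'I_m}) : R :=
  foldr (fun e acc => (p e + acc)%R) 0%R (enum S).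

Definition top_bidder m n (bids : 'I_n -> btype m) : option 'I_n :=
  first_max (fun i => vmax (bids i)) (enum 'I_n).

Definition proc_order m n (bids : 'I_n -> btype m) : seq 'I_n :=
  match top_bidder bids with
  | None => [::]
  | Some j => j :: [seq i <- enum 'I_n | i != j]
  end.

Definition mu_of m n (eps : R) (bids : 'I_n -> btype m) : R :=
  match top_bidder bids with
  | None => 0%R
  | Some j => ((1 + eps) * vmax (bids j))%R
  end.

Definition choose_set m (t : btype m) (p : 'I_m -> R) : {set 'I_m} :=
  odflt set0 (first_max (bval t)
     [seq S <- enum (bcoll t) | Rleb (price_sum p S) (bval t S)]).

Definition mpu_step m n (bids : 'I_n -> btype m) (r : R)
    (st : ('I_m -> R) * ('I_n -> {set 'I_m})) (i : 'I_n)
    : ('I_m -> R) * ('I_n -> {set 'I_m}) :=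
  let S := choose_set (bids i) st.1 in
  ((fun e => if e \in S then (st.1 e * r)%R else st.1 e),
   (fun i' => if i' == i then S else st.2 i')).

Definition mpu_alloc (b : nat) (eps : R) m n (bids : 'I_n -> btype m)
    : 'I_n -> {set 'I_m} :=
  let mu := mu_of eps bids in
  let p0 := (mu / (4 * INR b * INR m))%R in
  let r := Rpower (4 * INR b * INR m) (/ INR b) in
  (foldl (mpu_step bids r) ((fun _ => p0), (fun _ => set0)) (proc_order bids)).2.

Definition feasible m n (b : nat) (X : 'I_n -> {set 'I_m}) : Prop :=
  forall e : 'I_m, (#|[set i | e \in X i]| <= b)%N.

Definition welfare m n (t : 'I_n -> btype m) (X : 'I_n -> {set 'I_m}) : R :=
  foldr (fun i acc => (vext (t i) (X i) + acc)%R) 0%R (enum 'I_n).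

Definition upd m n (bids : 'I_n -> btype m) (i : 'I_n) (d : btype m) :=
  fun i' => if i' == i then d else bids i'.

(* The bidder j with the largest declared value vmax is served first, at the
   uniform initial price p0 = mu / (4 b m) with mu = (1 + eps) vmax; since all
   goods together cost at most mu / 4, j receives a bundle worth vmax
   (top_bidder_gets_vmax).

   A bidder i is served once, at prices fixed by the bidders
   served before it.  If truthfully i is the top bidder, it gets vmax, the most
   it can get; a lie that makes i the top bidder needs a larger vmax, which
   verification rules out; otherwise both declarations yield the same order
   and the same prices (same_top_same_prices), and at fixed prices a verified
   lie cannot beat the truthful demand (choose_set_truthful).

   Along a run every price equals p0 * r ^ load, where the load
   of a good counts the bidders holding it.  Since p0 * r ^ b = mu exceeds
   every declared value, a good of load b is never bought again.

   A primal-dual argument: every declared bundle is worth at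
   most what its bidder got plus its final price (run_value_bound); a feasible
   allocation X pays at most b times the total final price; serving a bidder
   raises the total price by at most (r - 1) times the value it receives; and
   r <= 4 m^(1/b). *)
From HB Require Import structures.
From mathcomp Require Import all_boot.
From Stdlib Require Import Reals Lra.
Set Implicit Arguments. Unset Strict Implicit. Unset Printing Implicit Defensive.

Lemma RplusA : associative Rplus. Proof. by move=> x y z; ring. Qed.
HB.instance Definition _ :=
  Monoid.isComLaw.Build R 0%R Rplus RplusA Rplus_comm Rplus_0_l.

Lemma big_Rle (I : Type) (r : seq I) (P : pred I) (F G : I -> R) :
  (forall i, P i -> (F i <= G i)%R) ->
  (\big[Rplus/0%R]_(i <- r | P i) F i <= \big[Rplus/0%R]_(i <- r | P i) G i)%R.
Proof. by move=> FG; apply: (big_ind2 (fun x y => x <= y)%R) => *; lra || auto. Qed.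

Lemma big_Rge0 (I : Type) (r : seq I) (P : pred I) (F : I -> R) :
  (forall i, P i -> (0 <= F i)%R) -> (0 <= \big[Rplus/0%R]_(i <- r | P i) F i)%R.
Proof. by move=> F0; apply: (big_ind (fun x => 0 <= x)%R) => *; lra || auto. Qed.

Lemma big_Rdistr (I : Type) (r : seq I) (P : pred I) (F : I -> R) c :
  (\big[Rplus/0%R]_(i <- r | P i) (c * F i) = c * \big[Rplus/0%R]_(i <- r | P i) F i)%R.
Proof. by symmetry; apply: (big_morph (fun x => c * x)%R) => [x y|]; ring. Qed.

Lemma iter_Rplus n c : iter n (Rplus c) 0%R = (INR n * c)%R.
Proof. by elim: n => [|n IH]; rewrite ?S_INR /= ?IH; ring. Qed.

Lemma big_Rconst n c : \big[Rplus/0%R]_(i < n) c = (INR n * c)%R.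
Proof. by rewrite big_const_ord iter_Rplus. Qed.

Lemma foldr_big (I : Type) (s : seq I) (p : I -> R) :
  foldr (fun e acc => (p e + acc)%R) 0%R s = \big[Rplus/0%R]_(e <- s) p e.
Proof. by elim: s => [|x s IH] /=; rewrite ?big_nil ?big_cons ?IH. Qed.

Lemma INR_ge1 k : (0 < k)%N -> (1 <= INR k)%R.
Proof. by move=> k0; apply: (le_INR 1); apply/leP. Qed.

Lemma price_sumE m (p : 'I_m -> R) S :
  price_sum p S = \big[Rplus/0%R]_(e < m) (if e \in S then p e else 0%R).
Proof. by rewrite /price_sum foldr_big big_enum -big_mkcond. Qed.

Lemma price_sum0 m (p : 'I_m -> R) : price_sum p set0 = 0%R.
Proof. by rewrite price_sumE big1 // => e _; rewrite in_set0. Qed.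

Lemma price_sum_ge0 m (p : 'I_m -> R) S :
  (forall e, 0 <= p e)%R -> (0 <= price_sum p S)%R.
Proof. by move=> p0; rewrite price_sumE; apply: big_Rge0 => e _; case: ifP => _ //; lra. Qed.

Lemma price_sum_elem m (p : 'I_m -> R) (S : {set 'I_m}) e :
  (forall e, 0 <= p e)%R -> e \in S -> (p e <= price_sum p S)%R.
Proof.
move=> p0 eS; rewrite price_sumE (bigD1 e) //= eS -[X in (X <= _)%R]Rplus_0_r.
by apply: Rplus_le_compat_l; apply: big_Rge0 => i _; case: ifP => _ //; lra.
Qed.

Lemma price_sum_mono m (p q : 'I_m -> R) (S T : {set 'I_m}) :
  (forall e, 0 <= p e)%R -> (forall e, p e <= q e)%R -> S \subset T ->
  (price_sum p S <= price_sum q T)%R.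
Proof.
move=> p0 pq /subsetP ST; rewrite !price_sumE; apply: big_Rle => e _.
case: ifP => eS; first by rewrite ST.
by case: ifP => _; have := p0 e; have := pq e; lra.
Qed.

Lemma price_sum_const m c (S : {set 'I_m}) :
  (0 <= c)%R -> (price_sum (fun _ => c) S <= INR m * c)%R.
Proof.
by move=> c0; rewrite price_sumE -big_Rconst; apply: big_Rle => e _; case: ifP; lra.
Qed.

Section Valuation.
Variables (m : nat) (t : btype m).

Lemma vext_ge0 T : (0 <= vext t T)%R.
Proof.
rewrite /vext; elim: (enum _) => [|x s IH] /=; first lra.
by case: ifP => _ //; apply: Rle_trans IH (Rmax_r _ _).
Qed.

Lemma vext_ge (S T : {set 'I_m}) : S \in bcoll t -> S \subset T -> (bval t S <= vext t T)%R.
Proof.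
rewrite /vext -mem_enum; elim: (enum _) => [|x s IH] //=.
rewrite in_cons => /orP [/eqP <- -> | /IH IHs ST]; first exact: Rmax_l.
by case: ifP => _; [apply: Rle_trans (IHs ST) (Rmax_r _ _) | exact: IHs].
Qed.

Lemma vext_attain T : (vext t T <= 0)%R \/
  exists S, [/\ S \in bcoll t, S \subset T & vext t T = bval t S].
Proof.
rewrite /vext; have : {subset enum (bcoll t) <= bcoll t} by move=> S; rewrite mem_enum.
elim: (enum _) => [|x s IH] /= sub; first by left; lra.
have {}IH := IH (fun S Ss => sub S (ltac:(by rewrite in_cons Ss orbT))).
case: ifP => xT //; set a := foldr _ _ _ in IH *.
case: (Rle_dec a (bval t x)) => ax; last by rewrite Rmax_right //; lra.
by rewrite Rmax_left //; right; exists x; split => //; apply: sub; rewrite mem_head.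
Qed.

Lemma vext_le_vmax T : (vext t T <= vmax t)%R.
Proof.
rewrite /vext /vmax; elim: (enum _) => [|x s IH] /=; first lra.
by case: ifP => _; [apply: Rle_max_compat_l | apply: Rle_trans IH (Rmax_r _ _)].
Qed.

Lemma vmax_ge0 : (0 <= vmax t)%R.
Proof.
rewrite /vmax; elim: (enum _) => [|x s IH] /=; first lra.
exact: Rle_trans IH (Rmax_r _ _).
Qed.

Lemma vmax_ge S : S \in bcoll t -> (bval t S <= vmax t)%R.
Proof. by move=> St; apply: Rle_trans (vext_ge St (subxx S)) (vext_le_vmax _). Qed.

Lemma vmax_attain : (vmax t <= 0)%R \/ exists2 S, S \in bcoll t & vmax t = bval t S.
Proof.
rewrite /vmax; have : {subset enum (bcoll t) <= bcoll t} by move=> S; rewrite mem_enum.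
elim: (enum _) => [|x s IH] /= sub; first by left; lra.
have {}IH := IH (fun S Ss => sub S (ltac:(by rewrite in_cons Ss orbT))); set a := foldr _ _ _ in IH *.
case: (Rle_dec a (bval t x)) => ax; last by rewrite Rmax_right //; lra.
by rewrite Rmax_left //; right; exists x => //; apply: sub; rewrite mem_head.
Qed.
End Valuation.

Section FirstMax.
Variables (A : eqType) (f : A -> R).

Lemma first_max_rcons l z :
  first_max f (rcons l z) = match first_max f l with
    | None => Some z
    | Some y => if Rlt_dec (f y) (f z) then Some z else Some y end.
Proof. by rewrite /first_max foldl_rcons. Qed.

Lemma first_max_None l : first_max f l = None -> l = [::].
Proof.
elim/last_ind: l => [|l z _] //; rewrite first_max_rcons.
by case: (first_max f l) => [y|] //; case: Rlt_dec.
Qed.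

Lemma first_max_split l x : first_max f l = Some x ->
  exists l1 l2, [/\ l = l1 ++ x :: l2, (forall y, y \in l1 -> f y < f x)%R &
                    (forall y, y \in l2 -> f y <= f x)%R].
Proof.
elim/last_ind: l x => [|l z IH] x //; rewrite first_max_rcons.
case E: (first_max f l) => [y|]; last first.
  by move=> [<-]; rewrite (first_max_None E); exists [::], [::].
have [l1 [l2 [-> lt1 le2]]] := IH _ E.
case: Rlt_dec => yz [<-].
  exists (l1 ++ y :: l2), [::]; split => //; first by rewrite cats1.
  by move=> w; rewrite mem_cat in_cons => /orP [/lt1|/orP [/eqP ->|/le2]]; lra.
exists l1, (rcons l2 z); split => //; first by rewrite rcons_cat rcons_cons.
by move=> w; rewrite mem_rcons in_cons => /orP [/eqP ->|/le2]; lra.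
Qed.

Lemma first_max_mem l x : first_max f l = Some x ->
  x \in l /\ (forall y, y \in l -> f y <= f x)%R.
Proof.
move=> /first_max_split [l1 [l2 [-> lt1 le2]]]; split.
  by rewrite mem_cat mem_head orbT.
by move=> y; rewrite mem_cat in_cons => /orP [/lt1|/orP [/eqP ->|/le2]]; lra.
Qed.

Lemma first_max_earlier l x y : uniq l -> first_max f l = Some x ->
  y \in l -> (index y l < index x l)%N -> (f y < f x)%R.
Proof.
move=> U /first_max_split [l1 [l2 [El lt1 _]]] yl; subst l.
have xl1 : x \notin l1 by move: U; rewrite cat_uniq /= => /and3P [_ /norP []].
rewrite [index x _]index_cat (negbTE xl1) /= eqxx addn0 index_cat.
by case: ifP => [/lt1 //|_]; rewrite ltnNge leq_addr.
Qed.
End FirstMax.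

Lemma index_neq (T : eqType) (l : seq T) x y :
  x \in l -> y \in l -> x != y -> index x l != index y l.
Proof. by move=> xl yl; apply: contraNN => /eqP E; rewrite -(nth_index x xl) E nth_index. Qed.

Section FirstMaxCompare.
Variables (A : eqType) (f g : A -> R) (l : seq A) (i : A).
Hypotheses (Ul : uniq l) (fg : forall z, z != i -> f z = g z).

Lemma first_max_agree x y : first_max f l = Some x -> first_max g l = Some y ->
  x != i -> y != i -> x = y.
Proof.
move=> Fx Gy xi yi; apply/eqP; apply: contraT => xy.
have [xl Fle] := first_max_mem Fx; have [yl Gle] := first_max_mem Gy.
have := index_neq xl yl xy; rewrite neq_ltn => /orP [lt|lt].
  by have := first_max_earlier Ul Gy xl lt; have := Fle _ yl; rewrite !fg //; lra.
by have := first_max_earlier Ul Fx yl lt; have := Gle _ xl; rewrite -!fg //; lra.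
Qed.

Lemma first_max_switch y : first_max f l = Some i -> first_max g l = Some y ->
  y != i -> (g i < f i)%R.
Proof.
move=> Fi Gy yi; have [il Fle] := first_max_mem Fi; have [yl Gle] := first_max_mem Gy.
have iy : i != y by rewrite eq_sym.
have := index_neq il yl iy; rewrite neq_ltn => /orP [lt|lt].
  by have := first_max_earlier Ul Gy il lt; have := Fle _ yl; rewrite fg //; lra.
by have := first_max_earlier Ul Fi yl lt; have := Gle _ il; rewrite fg //; lra.
Qed.
End FirstMaxCompare.

Lemma choose_setP m (d : btype m) P :
  (choose_set d P = set0 /\ forall S, S \in bcoll d -> (bval d S < price_sum P S)%R) \/
  [/\ choose_set d P \in bcoll d,
      (price_sum P (choose_set d P) <= bval d (choose_set d P))%R &
      forall S, S \in bcoll d -> (price_sum P S <= bval d S)%R ->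
        (bval d S <= bval d (choose_set d P))%R].
Proof.
have RlebP x y : Rleb x y = true <-> (x <= y)%R by rewrite /Rleb; case: Rle_dec.
rewrite /choose_set; set l := [seq S <- _ | _].
case E: (first_max _ l) => [S|] /=.
  have [Sl Smax] := first_max_mem E.
  move: (Sl); rewrite mem_filter mem_enum => /andP [/RlebP SP Sd].
  right; split => // S' S'd S'P; apply: Smax.
  by rewrite mem_filter mem_enum S'd andbT; apply/RlebP.
left; split => // S Sd; case: (Rlt_dec (bval d S) (price_sum P S)) => // SP.
have : S \in l by rewrite mem_filter mem_enum Sd andbT; apply/RlebP; lra.
by rewrite (first_max_None E).
Qed.

Lemma choose_set_affordable m (d : btype m) P : (forall e, 0 <= P e)%R ->
  (price_sum P (choose_set d P) <= vext d (choose_set d P))%R.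
Proof.
move=> P0; have [[-> _]|[Ad PA _]] := choose_setP d P.
  by rewrite price_sum0; exact: vext_ge0.
exact: Rle_trans PA (vext_ge Ad (subxx _)).
Qed.

(* The true value of d's choice comes from a
   true bundle S inside it, which is then affordable for t. *)
Lemma choose_set_truthful m (d t : btype m) P : (forall e, 0 <= P e)%R ->
  (vext d (choose_set d P) <= vext t (choose_set d P))%R ->
  (vext t (choose_set d P) <= vext t (choose_set t P))%R.
Proof.
move=> P0 verif; have PA := choose_set_affordable d P0.
set A := choose_set d P in verif PA *.
have [tA0|[S [St SA tAS]]] := vext_attain t A.
  by have := vext_ge0 t (choose_set t P); lra.
have SP : (price_sum P S <= bval t S)%R.
  by have := price_sum_mono P0 (fun e => Rle_refl _) SA; lra.
have [[_ unaff]|[Bt _ Bmax]] := choose_setP t P; first by have := unaff _ St; lra.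
by rewrite tAS; apply: Rle_trans (Bmax _ St SP) (vext_ge Bt (subxx _)).
Qed.

Section Run.
Variables (m n : nat) (bids : 'I_n -> btype m) (r : R).

Lemma run_notin s st x : x \notin s -> (foldl (mpu_step bids r) st s).2 x = st.2 x.
Proof.
elim: s st => [|y s IH] st //=; rewrite in_cons negb_or => /andP [xy xs].
by rewrite IH //= (negbTE xy).
Qed.

Lemma run_split s1 s2 i st : uniq (s1 ++ i :: s2) ->
  (foldl (mpu_step bids r) st (s1 ++ i :: s2)).2 i =
  choose_set (bids i) (foldl (mpu_step bids r) st s1).1.
Proof.
rewrite cat_uniq /= => /and4P [_ _ ni _].
by rewrite foldl_cat /= run_notin //= eqxx.
Qed.

Lemma step_price_ge0 st x : (0 <= r)%R -> (forall e, 0 <= st.1 e)%R ->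
  forall e, (0 <= (mpu_step bids r st x).1 e)%R.
Proof. by move=> r0 st0 e /=; case: ifP => _; have := st0 e; nra. Qed.

Lemma run_price_ge0 s st : (0 <= r)%R -> (forall e, 0 <= st.1 e)%R ->
  forall e, (0 <= (foldl (mpu_step bids r) st s).1 e)%R.
Proof.
move=> r0; elim: s st => [|y s IH] st st0 //=.
by apply: IH; apply: step_price_ge0.
Qed.

Lemma run_price_mono s st : (1 <= r)%R -> (forall e, 0 <= st.1 e)%R ->
  forall e, (st.1 e <= (foldl (mpu_step bids r) st s).1 e)%R.
Proof.
move=> r1; elim: s st => [|y s IH] st st0 e /=; first lra.
apply: Rle_trans (IH _ (step_price_ge0 y ltac:(lra) st0) e).
by rewrite /=; case: ifP => _; have := st0 e; nra.
Qed.
End Run.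

Lemma run_agree m n (bids bids' : 'I_n -> btype m) r s st :
  {in s, bids =1 bids'} ->
  foldl (mpu_step bids r) st s = foldl (mpu_step bids' r) st s.
Proof.
elim: s st => [|y s IH] st same //=.
rewrite /mpu_step same ?mem_head //; apply: IH => x xs.
by apply: same; rewrite in_cons xs orbT.
Qed.

Definition price_rate (b m : nat) : R := Rpower (4 * INR b * INR m) (/ INR b).

Definition init_price (b m : nat) (mu : R) : R := (mu / (4 * INR b * INR m))%R.

Definition init_state m n (p0 : R) : ('I_m -> R) * ('I_n -> {set 'I_m}) :=
  ((fun _ => p0), fun _ => set0).
Arguments init_state {m n}.

Lemma mpu_allocE b eps m n (bids : 'I_n -> btype m) :
  mpu_alloc b eps bids =
  (foldl (mpu_step bids (price_rate b m)) (init_state (init_price b m (mu_of eps bids)))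
     (proc_order bids)).2.
Proof. by []. Qed.

Lemma INR_succ_le_pow4 k : (INR k.+1 <= 4 ^ k)%R.
Proof.
elim: k => [|k IH]; first by rewrite /=; lra.
by rewrite S_INR; have := pow_R1_Rle 4 k; simpl in IH |- *; lra.
Qed.

Section PriceParameters.
Variables (b m : nat).
Hypotheses (b_gt0 : (0 < b)%N) (m_gt0 : (0 < m)%N).

Let b1 : (1 <= INR b)%R := INR_ge1 b_gt0.
Let m1 : (1 <= INR m)%R := INR_ge1 m_gt0.

Lemma price_rate_ge1 : (1 <= price_rate b m)%R.
Proof.
rewrite /price_rate -(Rpower_O (4 * INR b * INR m)); last nra.
apply: Rle_Rpower; first nra.
by apply: Rlt_le; apply: Rinv_0_lt_compat; lra.
Qed.

Lemma init_price_rate_pow mu : (init_price b m mu * price_rate b m ^ b = mu)%R.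
Proof.
rewrite /price_rate -Rpower_pow; last by apply: exp_pos.
rewrite Rpower_mult Rinv_l; last lra.
by rewrite Rpower_1; [rewrite /init_price; field; lra | nra].
Qed.

Lemma init_price_ge0 mu : (0 <= mu)%R -> (0 <= init_price b m mu)%R.
Proof.
move=> mu0; apply: Rmult_le_pos => //.
by apply: Rlt_le; apply: Rinv_0_lt_compat; nra.
Qed.

Lemma init_price_total mu : (0 <= mu)%R -> (INR m * init_price b m mu <= mu / 4)%R.
Proof.
move=> mu0; have -> : (INR m * init_price b m mu = mu / 4 * / INR b)%R.
  by rewrite /init_price; field; lra.
rewrite -[X in (_ <= X)%R]Rmult_1_r; apply: Rmult_le_compat_l; first lra.
by rewrite -Rinv_1; apply: Rinv_le_contravar; lra.
Qed.

Lemma root_ge1 : (1 <= Rpower (INR m) (/ INR b))%R.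
Proof.
rewrite -(Rpower_O (INR m)); last lra.
by apply: Rle_Rpower => //; apply: Rlt_le; apply: Rinv_0_lt_compat; lra.
Qed.

(* r = (4 b m)^(1/b) <= 4 m^(1/b), because 4 b <= 4 ^ b. *)
Lemma price_rate_bound : (price_rate b m <= 4 * Rpower (INR m) (/ INR b))%R.
Proof.
have ib : (0 < / INR b)%R by apply: Rinv_0_lt_compat; lra.
rewrite /price_rate -Rpower_mult_distr; [|nra|lra].
apply: Rmult_le_compat_r; first by apply: Rlt_le; apply: exp_pos.
have pow4 : (4 * INR b <= 4 ^ b)%R.
  by rewrite -(prednK b_gt0) -tech_pow_Rmult; have := INR_succ_le_pow4 b.-1; lra.
apply: Rle_trans (Rle_Rpower_l _ _ _ (Rlt_le _ _ ib) (conj _ pow4)) _; first lra.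
rewrite -Rpower_pow; last lra.
by rewrite Rpower_mult Rinv_r ?Rpower_1; lra.
Qed.
End PriceParameters.

Section ProcessingOrder.
Variables (m n : nat) (bids : 'I_n -> btype m).

Lemma top_bidder_exists (i : 'I_n) : exists j, top_bidder bids = Some j.
Proof.
case E: (top_bidder bids) => [j|]; first by exists j.
have : i \in enum 'I_n by rewrite mem_enum.
by rewrite (first_max_None E).
Qed.

Lemma top_bidder_max j : top_bidder bids = Some j ->
  forall i, (vmax (bids i) <= vmax (bids j))%R.
Proof. by move=> /first_max_mem [_ jmax] i; apply: jmax; rewrite mem_enum. Qed.

Lemma proc_orderE j : top_bidder bids = Some j ->
  proc_order bids = j :: [seq i <- enum 'I_n | i != j].
Proof. by rewrite /proc_order => ->. Qed.

Lemma mu_ofE eps j : top_bidder bids = Some j ->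
  mu_of eps bids = ((1 + eps) * vmax (bids j))%R.
Proof. by rewrite /mu_of => ->. Qed.

Lemma mu_of_ge0 eps : (0 <= eps)%R -> (0 <= mu_of eps bids)%R.
Proof.
rewrite /mu_of; case: top_bidder => [j|] eps0; last lra.
by apply: Rmult_le_pos; [lra | apply: vmax_ge0].
Qed.

Lemma proc_order_uniq : uniq (proc_order bids).
Proof.
rewrite /proc_order; case: top_bidder => [j|] //=.
by rewrite mem_filter eqxx filter_uniq // enum_uniq.
Qed.

Lemma proc_order_mem i : i \in proc_order bids.
Proof.
have [j Ej] := top_bidder_exists i.
by rewrite (proc_orderE Ej) in_cons mem_filter mem_enum; case: eqP.
Qed.

Lemma proc_order_perm : perm_eq (proc_order bids) (enum 'I_n).
Proof.
apply: uniq_perm; [exact: proc_order_uniq | exact: enum_uniq |].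
by move=> x; rewrite mem_enum proc_order_mem.
Qed.
End ProcessingOrder.

(* The top bidder j is served first, at the uniform initial price p0; since
   m * p0 <= mu / 4 <= vmax, its most valuable bundle is affordable. *)
Lemma top_bidder_gets_vmax b eps m n (bids : 'I_n -> btype m) j :
  (0 < m)%N -> (0 < b)%N -> (0 <= eps < 1)%R -> top_bidder bids = Some j ->
  (vmax (bids j) <= vext (bids j) (mpu_alloc b eps bids j))%R.
Proof.
move=> m0 b0 eps01 Ej.
rewrite mpu_allocE (proc_orderE Ej) /= run_notin; last by rewrite mem_filter eqxx.
rewrite /= eqxx (mu_ofE _ Ej).
set v := vmax (bids j); have v0 : (0 <= v)%R := vmax_ge0 _.
have mu0 : (0 <= (1 + eps) * v)%R by apply: Rmult_le_pos; lra.
set p0 := init_price b m _.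
have p00 : (0 <= p0)%R := init_price_ge0 b0 m0 mu0.
have mu2v : ((1 + eps) * v <= 2 * v)%R by nra.
have mp0 : (INR m * p0 <= v)%R by have := init_price_total b0 m0 mu0; rewrite -/p0; lra.
have [v_le0|[S Sd vS]] := vmax_attain (bids j).
  by rewrite -/v in v_le0; have := vext_ge0 (bids j) (choose_set (bids j) (fun=> p0)); lra.
rewrite -/v in vS.
have SP : (price_sum (fun _ => p0) S <= bval (bids j) S)%R.
  by have := price_sum_const S p00; lra.
have [[_ unaff]|[Ad _ Amax]] := choose_setP (bids j) (fun _ => p0).
  by have := unaff _ Sd; lra.
by rewrite vS; apply: Rle_trans (Amax _ Sd SP) (vext_ge Ad (subxx _)).
Qed.

(* If both declarations t and d of bidder i leave the same top bidder j != i,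
   then they induce the same processing order and initial price, so i faces
   the same prices P either way. *)
Lemma same_top_same_prices b eps m n (bids : 'I_n -> btype m) i (t d : btype m) j :
  (0 < m)%N -> (0 < b)%N -> (0 <= eps)%R ->
  top_bidder (upd bids i d) = Some j -> top_bidder (upd bids i t) = Some j -> j != i ->
  exists2 P : 'I_m -> R, (forall e, 0 <= P e)%R &
    mpu_alloc b eps (upd bids i d) i = choose_set d P /\
    mpu_alloc b eps (upd bids i t) i = choose_set t P.
Proof.
move=> m0 b0 eps0 Ed Et ji.
set bd := upd bids i d in Ed *; set bt := upd bids i t in Et *.
have bdi : bd i = d by rewrite /bd /upd eqxx.
have bti : bt i = t by rewrite /bt /upd eqxx.
have same : forall x, x != i -> bd x = bt x by move=> x xi; rewrite /bd /bt /upd (negbTE xi).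
have same_order : proc_order bd = proc_order bt by rewrite (proc_orderE Ed) (proc_orderE Et).
have same_mu : mu_of eps bd = mu_of eps bt by rewrite (mu_ofE _ Ed) (mu_ofE _ Et) same.
have [s1 [s2 Es]] : exists s1 s2, proc_order bt = s1 ++ i :: s2.
  by case/splitPr: (proc_order_mem bt i) => s1 s2; exists s1, s2.
have U := proc_order_uniq bt; rewrite Es in U.
have is1 : i \notin s1 by move: U; rewrite cat_uniq /= => /and3P [_ /norP []].
set P := (foldl (mpu_step bt (price_rate b m))
            (init_state (init_price b m (mu_of eps bt))) s1).1.
exists P.
  apply: run_price_ge0; first by have := price_rate_ge1 b0 m0; lra.
  by move=> e; apply: init_price_ge0 => //; apply: mu_of_ge0.
rewrite !mpu_allocE same_order same_mu Es !run_split // bdi bti.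
by rewrite (@run_agree _ _ bd bt) // => x xs; apply: same; apply: contraTneq xs => ->.
Qed.

Lemma truthful (m n b : nat) (eps : R) (bids : 'I_n -> btype m) (i : 'I_n) (t d : btype m) :
  (0 < m)%N -> (0 < b)%N -> (0 <= eps < 1)%R ->
  (vext d (mpu_alloc b eps (upd bids i d) i) <= vext t (mpu_alloc b eps (upd bids i d) i))%R ->
  (vext t (mpu_alloc b eps (upd bids i d) i) <= vext t (mpu_alloc b eps (upd bids i t) i))%R.
Proof.
move=> m0 b0 eps01 verif.
set bd := upd bids i d in verif *; set bt := upd bids i t.
have bdi : bd i = d by rewrite /bd /upd eqxx.
have bti : bt i = t by rewrite /bt /upd eqxx.
have same_vmax : forall x, x != i -> vmax (bd x) = vmax (bt x).
  by move=> x xi; rewrite /bd /bt /upd (negbTE xi).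
have U := enum_uniq 'I_n.
have [jd Ed] := top_bidder_exists bd i; have [jt Et] := top_bidder_exists bt i.
have [jti|jti] := eqVneq jt i.
  (* Truthfully i is the top bidder and gets a bundle worth vmax t. *)
  have := top_bidder_gets_vmax m0 b0 eps01 (etrans Et (congr1 Some jti)).
  by rewrite bti; apply: Rle_trans (vext_le_vmax _ _).
have [jdi|jdi] := eqVneq jd i.
  (* Becoming the top bidder by lying needs vmax d > vmax t, but verification
     then bounds vmax d by the true value of a bundle. *)
  rewrite jdi in Ed; exfalso.
  have := first_max_switch U same_vmax Ed Et jti.
  have := top_bidder_gets_vmax m0 b0 eps01 Ed.
  by have := vext_le_vmax t (mpu_alloc b eps bd i); rewrite bdi bti; lra.
have jdt := first_max_agree U same_vmax Ed Et jdi jti; subst jd.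
have [P P0 [Ad At]] := same_top_same_prices m0 b0 (proj1 eps01) Ed Et jti.
by move: verif; rewrite -/bd Ad At; apply: choose_set_truthful.
Qed.

Definition load m n (X : 'I_n -> {set 'I_m}) (e : 'I_m) : nat := #|[set y | e \in X y]|.

(* Invariant of a run: each price is p0 * r ^ load and no load exceeds b.  A
   good of load b costs p0 * r ^ b = mu, more than any declared value, so it
   is never bought again. *)
Section Feasibility.
Variables (m n b : nat) (bids : 'I_n -> btype m) (r p0 mu : R).
Hypotheses (r1 : (1 <= r)%R) (p00 : (0 <= p0)%R) (p0_rb : (p0 * r ^ b = mu)%R).
Hypothesis vmax_lt_mu : forall x, (vmax (bids x) < mu)%R.

Definition price_invariant (st : ('I_m -> R) * ('I_n -> {set 'I_m})) : Prop :=
  forall e, st.1 e = (p0 * r ^ load st.2 e)%R /\ (load st.2 e <= b)%N.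

Lemma step_invariant st x : price_invariant st -> st.2 x = set0 ->
  price_invariant (mpu_step bids r st x).
Proof.
move=> inv x0 e; have [pe le] := inv e.
have st0 : forall e, (0 <= st.1 e)%R.
  by move=> e'; rewrite (proj1 (inv e')); apply: Rmult_le_pos => //; apply: pow_le; lra.
set S := choose_set (bids x) st.1.
have loadE : load (mpu_step bids r st x).2 e = (e \in S) + load st.2 e.
  have xn : x \notin [set y | e \in st.2 y] by rewrite inE x0 in_set0.
  rewrite /load /= -/S; case: (boolP (e \in S)) => eS; last first.
    by apply: eq_card => y; rewrite !inE; case: eqP => // ->; rewrite x0 in_set0 (negbTE eS).
  transitivity #|x |: [set y | e \in st.2 y]|; last by rewrite cardsU1 xn.
  by apply: eq_card => y; rewrite !inE; case: eqP => [->|]; rewrite ?eS.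
rewrite loadE /= -/S; case: ifP => eS /=; last by rewrite add0n.
split; first by rewrite add0n pe; ring.
rewrite add1n ltnNge; apply/negP => full.
have [[S0 _]|[Sd SP _]] := choose_setP (bids x) st.1.
  by move: eS; rewrite /S S0 in_set0.
have price_mu : (mu <= st.1 e)%R.
  by rewrite pe -p0_rb; apply: Rmult_le_compat_l => //; apply: Rle_pow => //; apply/leP.
have := price_sum_elem st0 eS; have := vmax_ge Sd; have := vmax_lt_mu x.
by rewrite -/S in SP *; lra.
Qed.

Lemma run_invariant s st : uniq s -> price_invariant st ->
  {in s, forall y, st.2 y = set0} -> price_invariant (foldl (mpu_step bids r) st s).
Proof.
elim: s st => [|x s IH] st //= /andP [xs U] inv empty.
apply: IH => //; first by apply: step_invariant => //; apply: empty; rewrite mem_head.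
move=> y ys /=; have -> : (y == x) = false by apply: contraNF xs => /eqP <-.
by apply: empty; rewrite in_cons ys orbT.
Qed.
End Feasibility.

(* If some declared bundle has positive value, then mu = (1 + eps) vmax
   exceeds every declared value and the invariant yields feasibility. *)
Lemma feasibility (m n b : nat) (eps : R) (bids : 'I_n -> btype m) :
  (0 < m)%N -> (0 < b)%N -> (0 < eps)%R ->
  (exists (i : 'I_n) (S : {set 'I_m}), S \in bcoll (bids i) /\ (0 < bval (bids i) S)%R) ->
  feasible b (mpu_alloc b eps bids).
Proof.
move=> m0 b0 eps0 [i [S [Sd Spos]]].
have [j Ej] := top_bidder_exists bids i.
have vmax_pos : (0 < vmax (bids j))%R.
  exact: Rlt_le_trans Spos (Rle_trans _ _ _ (vmax_ge Sd) (top_bidder_max Ej i)).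
have vmax_lt_mu : forall x, (vmax (bids x) < mu_of eps bids)%R.
  by move=> x; rewrite (mu_ofE _ Ej); have := top_bidder_max Ej x; nra.
have p00 := init_price_ge0 b0 m0 (mu_of_ge0 bids (Rlt_le _ _ eps0)).
have inv0 : price_invariant b (price_rate b m) (init_price b m (mu_of eps bids))
              (init_state (init_price b m (mu_of eps bids)) : ('I_m -> R) * ('I_n -> {set 'I_m})).
  move=> e; rewrite /load /=.
  have -> : [set y : 'I_n | e \in set0] = set0 by apply/setP => y; rewrite !inE.
  by rewrite cards0 /=; split; first ring.
have inv := run_invariant (price_rate_ge1 b0 m0) p00 (init_price_rate_pow b0 m0 _)
  vmax_lt_mu (proc_order_uniq bids) inv0 (fun _ _ => erefl).
by move=> e; rewrite mpu_allocE; exact: (inv e).2.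
Qed.

(* The total price of all goods, the dual objective of the approximation. *)
Definition total_price m (P : 'I_m -> R) : R := \big[Rplus/0%R]_(e < m) P e.

Section PriceGrowth.
Variables (m n : nat) (t : 'I_n -> btype m) (r : R).
Hypothesis r1 : (1 <= r)%R.

Lemma step_total_price st x : total_price (mpu_step t r st x).1 =
  (total_price st.1 + (r - 1) * price_sum st.1 (choose_set (t x) st.1))%R.
Proof.
rewrite /total_price price_sumE -big_Rdistr -big_split /=; apply: eq_bigr => e _.
by case: ifP => _; ring.
Qed.

(* Since each bundle bought is worth at least its price, the total price
   grows by at most (r - 1) times the value handed out. *)
Lemma run_total_price s st : uniq s -> (forall e, 0 <= st.1 e)%R ->
  (total_price (foldl (mpu_step t r) st s).1 <= total_price st.1 +
   (r - 1) * \big[Rplus/0%R]_(x <- s) vext (t x) ((foldl (mpu_step t r) st s).2 x))%R.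
Proof.
elim: s st => [|x s IH] st /=; first by rewrite big_nil; lra.
move=> /andP [xs U] st0; have st0' := step_price_ge0 t x (ltac:(lra) : (0 <= r)%R) st0.
apply: Rle_trans (IH _ U st0') _.
rewrite step_total_price big_cons run_notin //= eqxx.
have := Rmult_le_compat_l (r - 1) _ _ (ltac:(lra) : (0 <= r - 1)%R)
          (choose_set_affordable (t x) st0).
by rewrite Rmult_plus_distr_l; lra.
Qed.

(* When
   x was served the bundle was either unaffordable or worth at most x's
   choice, and prices only rise afterwards. *)
Lemma run_value_bound s st x S : uniq s -> (forall e, 0 <= st.1 e)%R ->
  x \in s -> S \in bcoll (t x) ->
  (bval (t x) S <= vext (t x) ((foldl (mpu_step t r) st s).2 x) +
                   price_sum (foldl (mpu_step t r) st s).1 S)%R.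
Proof.
elim: s st => [|y s IH] st //= /andP [ys U] st0.
have st0' := step_price_ge0 t y (ltac:(lra) : (0 <= r)%R) st0.
rewrite in_cons => /orP [/eqP ->|xs]; last exact: IH.
move=> Sd; rewrite run_notin //= eqxx; set F := foldl _ _ _.
have rise : (price_sum st.1 S <= price_sum F.1 S)%R.
  exact: price_sum_mono st0 (run_price_mono t (y :: s) r1 st0) (subxx S).
have F0 : (0 <= price_sum F.1 S)%R.
  exact: price_sum_ge0 S (run_price_ge0 t s (ltac:(lra) : (0 <= r)%R) st0').
have := vext_ge0 (t y) (choose_set (t y) st.1).
case: (Rle_dec (price_sum st.1 S) (bval (t y) S)) => SP; last lra.
have [[_ unaff]|[Ad _ Amax]] := choose_setP (t y) st.1; first by have := unaff _ Sd; lra.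
by have := Amax _ Sd SP; have := vext_ge Ad (subxx _); lra.
Qed.
End PriceGrowth.

Section Welfare.
Variables (m n : nat) (t : 'I_n -> btype m).

Lemma welfareE (X : 'I_n -> {set 'I_m}) :
  welfare t X = \big[Rplus/0%R]_(x <- enum 'I_n) vext (t x) (X x).
Proof. by rewrite /welfare foldr_big. Qed.

Lemma welfare_ge0 X : (0 <= welfare t X)%R.
Proof. by rewrite welfareE; apply: big_Rge0 => x _; apply: vext_ge0. Qed.

Lemma welfare_ge_bidder X x : (vext (t x) (X x) <= welfare t X)%R.
Proof.
rewrite welfareE (bigD1_seq x) ?mem_enum ?enum_uniq //= -[X in (X <= _)%R]Rplus_0_r.
by apply: Rplus_le_compat_l; apply: big_Rge0 => y _; apply: vext_ge0.
Qed.

(* Weak duality: if prices P certify Y, then any allocation X has welfare at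
   most that of Y plus the price of X. *)
Lemma welfare_le_prices (X Y : 'I_n -> {set 'I_m}) (P : 'I_m -> R) :
  (forall e, 0 <= P e)%R ->
  (forall x S, S \in bcoll (t x) -> bval (t x) S <= vext (t x) (Y x) + price_sum P S)%R ->
  (welfare t X <= welfare t Y + \big[Rplus/0%R]_(x <- enum 'I_n) price_sum P (X x))%R.
Proof.
move=> P0 certif; rewrite !welfareE -big_split; apply: big_Rle => x _ /=.
have := vext_ge0 (t x) (Y x); have := price_sum_ge0 (X x) P0.
have [|[S [Sd SX ->]]] := vext_attain (t x) (X x); first lra.
by have := certif x S Sd; have := price_sum_mono P0 (fun e => Rle_refl _) SX; lra.
Qed.

Lemma feasible_price_bound b (X : 'I_n -> {set 'I_m}) (P : 'I_m -> R) :
  feasible b X -> (forall e, 0 <= P e)%R ->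
  (\big[Rplus/0%R]_(x <- enum 'I_n) price_sum P (X x) <= INR b * total_price P)%R.
Proof.
move=> feasX P0; under eq_bigr do rewrite price_sumE.
rewrite exchange_big /total_price -big_Rdistr; apply: big_Rle => e _.
rewrite -big_mkcond big_enum_cond.
have -> : \big[Rplus/0%R]_(x | e \in X x) P e = (INR (load X e) * P e)%R.
  by rewrite -iter_Rplus -big_const; apply: eq_bigl => x; rewrite inE.
by apply: Rmult_le_compat_r => //; apply: le_INR; apply/leP; exact: feasX.
Qed.
End Welfare.

(* The initial prices of all goods together are at most half the welfare of
   the outcome: m * p0 <= (1 + eps) vmax / 4 <= vmax / 2, and the top bidder
   alone already receives vmax. *)
Lemma initial_prices_small b eps m n (t : 'I_n -> btype m) :
  (0 < m)%N -> (0 < b)%N -> (0 <= eps < 1)%R ->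
  (INR m * init_price b m (mu_of eps t) <= welfare t (mpu_alloc b eps t) / 2)%R.
Proof.
move=> m0 b0 eps01; have W0 := welfare_ge0 t (mpu_alloc b eps t).
have := init_price_total b0 m0 (mu_of_ge0 t (proj1 eps01)).
case Et: (top_bidder t) => [j|]; last by rewrite /mu_of Et; lra.
have := top_bidder_gets_vmax m0 b0 eps01 Et.
have := welfare_ge_bidder t (mpu_alloc b eps t) j.
have : ((1 + eps) * vmax (t j) <= 2 * vmax (t j))%R by have := vmax_ge0 (t j); nra.
by rewrite (mu_ofE _ Et); lra.
Qed.

(* The final calculation: with welfare W, optimum O <= W + Q, price of the
   optimum Q <= B T, total price T <= W / 2 + (r - 1) W and r <= 4 M,
   O <= W + B (4 M - 1/2) W <= 5 B M W. *)
Lemma ratio_arith B M r W O Q T : (1 <= B)%R -> (1 <= M)%R -> (r <= 4 * M)%R ->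
  (0 <= W)%R -> (O <= W + Q)%R -> (Q <= B * T)%R -> (T <= W / 2 + (r - 1) * W)%R ->
  (O <= 5 * B * M * W)%R.
Proof.
move=> B1 M1 rM W0 OQ QT TW.
have T4 : (T <= (4 * M) * W)%R by have := Rmult_le_compat_r W _ _ W0 rM; lra.
have QB : (Q <= B * ((4 * M) * W))%R.
  by apply: Rle_trans QT _; apply: Rmult_le_compat_l; lra.
have WBMW : (W <= B * M * W)%R.
  by rewrite -[X in (X <= _)%R]Rmult_1_l; apply: Rmult_le_compat_r => //; nra.
by rewrite !Rmult_assoc in QB WBMW *; lra.
Qed.

Lemma approximation (m n b : nat) (eps : R) (t : 'I_n -> btype m) (X : 'I_n -> {set 'I_m}) :
  (0 < m)%N -> (0 < b)%N -> (0 <= eps < 1)%R -> feasible b X ->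
  (welfare t X <= 5 * INR b * Rpower (INR m) (/ INR b) * welfare t (mpu_alloc b eps t))%R.
Proof.
move=> m0 b0 eps01 feasX.
have small := initial_prices_small t m0 b0 eps01; rewrite mpu_allocE in small *.
set r := price_rate b m in small *; set p0 := init_price b m _ in small *.
set F := foldl _ _ _ in small *.
have r1 : (1 <= r)%R := price_rate_ge1 b0 m0.
have p00 : forall e : 'I_m, (0 <= (init_state p0 : _ * ('I_n -> _)).1 e)%R.
  by move=> e; apply: init_price_ge0 => //; apply: mu_of_ge0; lra.
have F0 : forall e, (0 <= F.1 e)%R by apply: run_price_ge0 => //; lra.
have U := proc_order_uniq t.
have opt_bound := welfare_le_prices X F0
  (fun x S Sd => run_value_bound r1 U p00 (proc_order_mem t x) Sd).
rewrite -/F in opt_bound.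
have total_bound : (total_price F.1 <= welfare t F.2 / 2 + (r - 1) * welfare t F.2)%R.
  have WE : \big[Rplus/0%R]_(x <- proc_order t) vext (t x) (F.2 x) = welfare t F.2.
    by rewrite welfareE (perm_big _ (proc_order_perm t)).
  have := run_total_price t r1 U p00; rewrite -/F WE {2}/total_price /= big_Rconst.
  by lra.
exact: ratio_arith (INR_ge1 b0) (root_ge1 b0 m0) (price_rate_bound b0 m0)
  (welfare_ge0 _ _) opt_bound (feasible_price_bound feasX F0) total_bound.
Qed.

Theorem theorem5 :
  (* feasibility: each good allocated at most b times *)
  (forall (m n b k : nat) (eps : R) (bids : 'I_n -> btype m),
     (0 < m)%N -> (0 < b)%N -> (0 < eps < 1)%R ->
     (forall i, wf_type k (bids i)) ->
     (exists (i : 'I_n) (S : {set 'I_m}), S \in bcoll (bids i) /\ (0 < bval (bids i) S)%R) ->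
     feasible b (mpu_alloc b eps bids))
  /\
  (* truthfulness without money, with verification *)
  (forall (m n b k : nat) (eps : R) (bids : 'I_n -> btype m) (i : 'I_n)
          (t d : btype m),
     (0 < m)%N -> (0 < b)%N -> (0 < eps < 1)%R ->
     (forall i', wf_type k (bids i')) -> wf_type k t -> wf_type k d ->
     (vext d (mpu_alloc b eps (upd bids i d) i)
        <= vext t (mpu_alloc b eps (upd bids i d) i))%R ->
     (vext t (mpu_alloc b eps (upd bids i d) i)
        <= vext t (mpu_alloc b eps (upd bids i t) i))%R)
  /\
  (* approximation ratio O(b m^(1/b)) on truthful inputs *)
  (exists C : R, (0 < C)%R /\
     forall (m n b k : nat) (eps : R) (t : 'I_n -> btype m),
       (0 < m)%N -> (0 < b)%N -> (0 < eps < 1)%R ->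
       (forall i, wf_type k (t i)) ->
       forall X : 'I_n -> {set 'I_m}, feasible b X ->
       (welfare t X <= C * INR b * Rpower (INR m) (/ INR b)
                        * welfare t (mpu_alloc b eps t))%R).
Proof.
split; last split.
- move=> m n b k eps bids m0 b0 [eps0 _] _; exact: feasibility.
- move=> m n b k eps bids i t d m0 b0 [eps0 eps1] _ _ _.
  by apply: truthful => //; lra.
- exists 5%R; split; first lra.
  move=> m n b k eps t m0 b0 [eps0 eps1] _ X feasX.
  by apply: approximation => //; lra.
Qed.
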